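(* Let $p$ be an odd prime and $\alpha$ an integer with $1\le\alpha<p$. Let $a,b,c$ be non-zero integers with $\gcd(a,b,c)=1$ satisfying $a^p+2^\alpha b^p+c^p=0$ and normalized so that $a\equiv -1 \pmod 4$. Put $A=a^p$, $B=2^\alpha b^p$, and let $E$ be the elliptic curve over $\mathbb{Q}$ given by $y^2=x(x-A)(x+B)$. If $(a,b,c)\neq(-1,1,-1)$, then $E$ has multiplicative reduction at some prime $q\neq 2$. *)

From HB Require Import structures.
From mathcomp Require Import all_boot all_order all_algebra.
Set Implicit Arguments. Unset Strict Implicit. Unset Printing Implicit Defensive.
Import Order.TTheory GRing.Theory Num.Theory.
Local Open Scope ring_scope.

(* Weierstrass equation y^2 + a1 xy + a3 y = x^3 + a2 x^2 + a4 x + a6 over Q *)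
Record weier := Weier { wa1 : rat; wa2 : rat; wa3 : rat; wa4 : rat; wa6 : rat }.

Definition wb2 (E : weier) := wa1 E ^+ 2 + 4%:R * wa2 E.
Definition wb4 (E : weier) := 2%:R * wa4 E + wa1 E * wa3 E.
Definition wb6 (E : weier) := wa3 E ^+ 2 + 4%:R * wa6 E.
Definition wb8 (E : weier) :=
  wa1 E ^+ 2 * wa6 E + 4%:R * wa2 E * wa6 E - wa1 E * wa3 E * wa4 E
  + wa2 E * wa3 E ^+ 2 - wa4 E ^+ 2.
Definition wc4 (E : weier) := wb2 E ^+ 2 - 24%:R * wb4 E.
Definition wdisc (E : weier) :=
  - wb2 E ^+ 2 * wb8 E - 8%:R * wb4 E ^+ 3 - 27%:R * wb6 E ^+ 2
  + 9%:R * wb2 E * wb4 E * wb6 E.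

(* E' is obtained from E by the change of variables
   x = u^2 x' + r, y = u^3 y' + s u^2 x' + t  (u <> 0), i.e. E ~=_Q E'. *)
Definition wiso (E E' : weier) : Prop :=
  exists u r s t : rat, u != 0 /\
    u * wa1 E' = wa1 E + 2%:R * s /\
    u ^+ 2 * wa2 E' = wa2 E - s * wa1 E + 3%:R * r - s ^+ 2 /\
    u ^+ 3 * wa3 E' = wa3 E + r * wa1 E + 2%:R * t /\
    u ^+ 4 * wa4 E' = wa4 E - s * wa3 E + 2%:R * r * wa2 E
                      - (t + r * s) * wa1 E + 3%:R * r ^+ 2 - 2%:R * s * t /\
    u ^+ 6 * wa6 E' = wa6 E + r * wa4 E + r ^+ 2 * wa2 E + r ^+ 3
                      - t * wa3 E - t ^+ 2 - r * t * wa1 E.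

(* q-adic valuation of a rational (0 for x = 0; only used on nonzero x) *)
Definition qval (q : nat) (x : rat) : int :=
  (logn q `|numq x|%N)%:Z - (logn q `|denq x|%N)%:Z.

Definition qint (q : nat) (x : rat) : bool := ~~ (q %| `|denq x|)%N.

Definition wintegral (q : nat) (E : weier) : Prop :=
  [/\ qint q (wa1 E), qint q (wa2 E), qint q (wa3 E), qint q (wa4 E)
    & qint q (wa6 E)].

Definition qdvd (q : nat) (x : rat) : bool := (q %| `|numq x|)%N.

Definition wminimal (q : nat) (E : weier) : Prop :=
  wintegral q E /\
  forall E', wiso E E' -> wintegral q E' -> qval q (wdisc E) <= qval q (wdisc E').

(* E has multiplicative reduction at q: the reduction mod q of a minimal
   model at q is singular (q | Delta) with a node (q does not divide c4). *)
Definition mult_reduction (q : nat) (E : weier) : Prop :=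
  exists E', [/\ wiso E E', wminimal q E', qdvd q (wdisc E') & ~~ qdvd q (wc4 E')].

(* The Frey curve y^2 = x(x - A)(x + B) = x^3 + (B - A) x^2 - A B x *)
Definition frey_curve (A B : rat) : weier := Weier 0 (B - A) 0 (- (A * B)) 0.

From HB Require Import structures.
From mathcomp Require Import all_boot all_order all_algebra.
From mathcomp Require Import ring zify.
Import Order.TTheory GRing.Theory Num.Theory.
Set Implicit Arguments. Unset Strict Implicit. Unset Printing Implicit Defensive.
Local Open Scope ring_scope.

(* Some odd prime q divides a c: otherwise a = -1 and c = 1 or -1, and the
   equation leaves only (a, b, c) = (-1, 1, -1).  Such a q divides A or
   A + B = -c^p, hence the discriminant 16 (A B (A + B))^2 of E, but not
   c4 = 16 (A^2 + A B + B^2), since a prime dividing c4 and one of A, B, A + B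
   divides A and B, hence a, b and c.  Finally E is q-integral with v_q(c4) = 0,
   so for any q-integral model u^4 c4' = c4 forces v_q(u) <= 0, whence
   v_q(disc') = v_q(disc) - 12 v_q(u) >= v_q(disc): E is minimal at q. *)

Definition wscale (u : rat) (E : weier) : weier :=
  Weier (u * wa1 E) (u ^+ 2 * wa2 E) (u ^+ 3 * wa3 E) (u ^+ 4 * wa4 E)
    (u ^+ 6 * wa6 E).

Definition wshift (r s t : rat) (E : weier) : weier :=
  Weier (wa1 E + 2%:R * s) (wa2 E - s * wa1 E + 3%:R * r - s ^+ 2)
    (wa3 E + r * wa1 E + 2%:R * t)
    (wa4 E - s * wa3 E + 2%:R * r * wa2 E - (t + r * s) * wa1 E
     + 3%:R * r ^+ 2 - 2%:R * s * t)
    (wa6 E + r * wa4 E + r ^+ 2 * wa2 E + r ^+ 3 - t * wa3 E - t ^+ 2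
     - r * t * wa1 E).

Lemma wc4_scale u E : wc4 (wscale u E) = u ^+ 4 * wc4 E.
Proof. by rewrite /wc4 /wb2 /wb4 /=; ring. Qed.

Lemma wdisc_scale u E : wdisc (wscale u E) = u ^+ 12 * wdisc E.
Proof. by rewrite /wdisc /wb2 /wb4 /wb6 /wb8 /=; ring. Qed.

Lemma wc4_shift r s t E : wc4 (wshift r s t E) = wc4 E.
Proof. by rewrite /wc4 /wb2 /wb4 /=; ring. Qed.

Lemma wdisc_shift r s t E : wdisc (wshift r s t E) = wdisc E.
Proof. by rewrite /wdisc /wb2 /wb4 /wb6 /wb8 /=; ring. Qed.

Lemma wiso_scale_shift E E' :
  wiso E E' -> exists2 u, u != 0 & exists r s t, wscale u E' = wshift r s t E.
Proof.
case=> u [r [s [t [u0 [h1 [h2 [h3 [h4 h6]]]]]]]]; exists u => //.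
by exists r, s, t; rewrite /wscale h1 h2 h3 h4 h6.
Qed.

Lemma wiso_refl E : wiso E E.
Proof. by exists 1, 0, 0, 0; split; [exact: oner_neq0 | do !split; ring]. Qed.

Lemma numq_denq_frac (x : rat) (n d : int) :
  x * d%:~R = n%:~R -> numq x * d = n * denq x.
Proof.
by move=> h; apply: (@intr_inj rat); rewrite !rmorphM /= numqE -h; ring.
Qed.

Lemma qval_frac q (x : rat) (n d : int) : n != 0 -> d != 0 ->
  x * d%:~R = n%:~R -> qval q x = (logn q `|n|)%:Z - (logn q `|d|)%:Z.
Proof.
move=> n0 d0 /numq_denq_frac e.
have nx0 : numq x != 0.
  apply: contraNneq n0 => nx; move/esym/eqP: (e).
  by rewrite nx mul0r mulf_eq0 denq_eq0 orbF; apply.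
have := congr1 (fun z : int => logn q `|z|) e => /=.
rewrite !abszM !lognM ?absz_gt0 ?denq_eq0 // /qval; lia.
Qed.

Lemma qval_int q (n : int) : qval q n%:~R = (logn q `|n|)%:Z.
Proof. by rewrite /qval numq_int denq_int logn1 subr0. Qed.

Lemma qvalM q (x y : rat) : x != 0 -> y != 0 ->
  qval q (x * y) = qval q x + qval q y.
Proof.
move=> x0 y0; rewrite (@qval_frac q _ (numq x * numq y) (denq x * denq y)).
- by rewrite /qval !abszM !lognM ?absz_gt0 ?numq_eq0 ?denq_eq0 //; lia.
- by rewrite mulf_neq0 ?numq_eq0.
- by rewrite mulf_neq0 ?denq_eq0.
by rewrite !rmorphM /= !numqE; ring.
Qed.

Lemma qvalX q (x : rat) k : x != 0 -> qval q (x ^+ k) = k%:Z * qval q x.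
Proof.
move=> x0; elim: k => [|k IHk].
  by rewrite expr0 mul0r -[1]/(1%:~R) qval_int logn1.
by rewrite exprS qvalM ?expf_neq0 // IHk intS mulrDl mul1r.
Qed.

Lemma logn_ndvd q m : ~~ (q %| m)%N -> logn q m = 0%N.
Proof. by move=> qm; rewrite lognE (negPf qm) !andbF. Qed.

Lemma qval_ge0 q x : qint q x -> 0 <= qval q x.
Proof. by move=> /logn_ndvd qx; rewrite /qval qx subr0. Qed.

Lemma qval_unit q x : qint q x -> ~~ qdvd q x -> qval q x = 0.
Proof. by move=> /logn_ndvd qx /logn_ndvd qn; rewrite /qval qx qn. Qed.

Lemma qintP (q : nat) (x : rat) :
  reflect (exists n d : int, ~~ (q %| `|d|)%N /\ x * d%:~R = n%:~R) (qint q x).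
Proof.
apply: (iffP idP) => [qx | [n [d [qd /numq_denq_frac e]]]].
  by exists (numq x), (denq x); rewrite numqE.
apply: contra qd => qden.
have : (`|denq x| %| `|numq x| * `|d|)%N by rewrite -abszM e abszM dvdn_mull.
by rewrite Gauss_dvdr 1?coprime_sym ?coprime_num_den // => /(dvdn_trans qden).
Qed.

Lemma qdvd_int q (n : int) : qdvd q n%:~R = (q%:Z %| n)%Z.
Proof. by rewrite /qdvd numq_int. Qed.

Lemma Euclid_dvdzM (q : nat) (x y : int) : prime q ->
  (q%:Z %| x * y)%Z = (q%:Z %| x)%Z || (q%:Z %| y)%Z.
Proof. by move=> q_pr; rewrite !dvdzE abszM Euclid_dvdM. Qed.

Lemma Euclid_dvdzX (q : nat) (x : int) n : prime q ->
  (q%:Z %| x ^+ n)%Z = (q%:Z %| x)%Z && (0 < n)%N.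
Proof. by move=> q_pr; rewrite !dvdzE abszX Euclid_dvdX. Qed.

Lemma prime_dvdz_sqr_form (q : nat) (A B : int) : prime q ->
  (q%:Z %| A ^+ 2 + A * B + B ^+ 2)%Z ->
  [|| (q%:Z %| A)%Z, (q%:Z %| B)%Z | (q%:Z %| A + B)%Z] ->
  (q%:Z %| A)%Z && (q%:Z %| B)%Z.
Proof.
move=> q_pr qF.
(* X^2 + X Y + Y^2 takes the same value at (A, B), (B, A) and (-(A + B), A). *)
have key X Y : X ^+ 2 + X * Y + Y ^+ 2 = A ^+ 2 + A * B + B ^+ 2 ->
    (q%:Z %| X)%Z -> (q%:Z %| Y)%Z.
  move=> eF qX; suff : (q%:Z %| Y ^+ 2)%Z by rewrite Euclid_dvdzX // andbT.
  have -> : Y ^+ 2 = (A ^+ 2 + A * B + B ^+ 2) - X * (X + Y).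
    by rewrite -eF; ring.
  by rewrite rpredB // dvdz_mulr.
case/or3P => [qA | qB | qAB].
- by rewrite qA (key A).
- by rewrite qB (key B) //; ring.
have qA : (q%:Z %| A)%Z by apply: (key (- (A + B))); [ring | rewrite rpredN].
by rewrite qA -(addKr A B) rpredD ?rpredN.
Qed.

Section QIntegral.
Variable q : nat.
Hypothesis q_prime : prime q.

Fact qint_subring_closed : subring_closed (qint q).
Proof.
split.
- apply/qintP; exists 1, 1; rewrite mulr1 /= dvdn1.
  by case: eqP q_prime => // ->.
- move=> x y /qintP [n1 [d1 [q1 h1]]] /qintP [n2 [d2 [q2 h2]]]; apply/qintP.
  exists (n1 * d2 - n2 * d1), (d1 * d2); split.
    by rewrite abszM Euclid_dvdM // negb_or q1 q2.
  by rewrite rmorphB !rmorphM /= -h1 -h2; ring.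
- move=> x y /qintP [n1 [d1 [q1 h1]]] /qintP [n2 [d2 [q2 h2]]]; apply/qintP.
  exists (n1 * n2), (d1 * d2); split.
    by rewrite abszM Euclid_dvdM // negb_or q1 q2.
  by rewrite !rmorphM /= -h1 -h2; ring.
Qed.

HB.instance Definition _ :=
  GRing.isSubringClosed.Build rat (qint q) qint_subring_closed.

Lemma wintegral_c4 E : wintegral q E -> qint q (wc4 E).
Proof.
case=> i1 i2 i3 i4 i6; rewrite -[qint q _]/(_ \in qint q) /wc4 /wb2 /wb4.
by rewrite ?(rpred_nat, rpredB, rpredM, rpredX, rpredD).
Qed.

Lemma wminimal_c4_unit E : wintegral q E -> ~~ qdvd q (wc4 E) -> wminimal q E.
Proof.
move=> intE c4E; split=> // E' /wiso_scale_shift [u u0 [r [s [t Eu]]]] intE'.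
have c4u : u ^+ 4 * wc4 E' = wc4 E by rewrite -wc4_scale Eu wc4_shift.
have discu : u ^+ 12 * wdisc E' = wdisc E.
  by rewrite -wdisc_scale Eu wdisc_shift.
have c4E0 : wc4 E != 0 by apply: contraNneq c4E => ->; rewrite /qdvd dvdn0.
have c4E'0 : wc4 E' != 0 by apply: contraNneq c4E0 => c0; rewrite -c4u c0 mulr0.
have vu : qval q u <= 0.
  have := congr1 (qval q) c4u.
  rewrite qvalM ?expf_neq0 // qvalX // (qval_unit (wintegral_c4 intE) c4E).
  by have := qval_ge0 (wintegral_c4 intE'); lia.
have [d0 | d'0] := eqVneq (wdisc E') 0; first by rewrite -discu d0 mulr0.
by rewrite -discu qvalM ?expf_neq0 // qvalX //; lia.
Qed.

Lemma mult_reduction_minimal E : wintegral q E ->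
  qdvd q (wdisc E) -> ~~ qdvd q (wc4 E) -> mult_reduction q E.
Proof.
move=> intE qD qc4; exists E; split => //; first exact: wiso_refl.
exact: wminimal_c4_unit.
Qed.

Lemma frey_c4 (A B : int) :
  wc4 (frey_curve A%:~R B%:~R) = (16 * (A ^+ 2 + A * B + B ^+ 2))%:~R.
Proof. by rewrite /wc4 /wb2 /wb4 /=; ring. Qed.

Lemma frey_disc (A B : int) :
  wdisc (frey_curve A%:~R B%:~R) = (16 * (A * B * (A + B)) ^+ 2)%:~R.
Proof. by rewrite /wdisc /wb2 /wb4 /wb6 /wb8 /=; ring. Qed.

Lemma frey_wintegral (A B : int) : wintegral q (frey_curve A%:~R B%:~R).
Proof.
split; rewrite -[qint q _]/(_ \in qint q) /=;
  by rewrite ?(rpred0, rpredB, rpredN, rpredM, rpred_int).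
Qed.

Lemma frey_mult_reduction (A B : int) : q != 2 ->
  [|| (q%:Z %| A)%Z, (q%:Z %| B)%Z | (q%:Z %| A + B)%Z] ->
  ~~ ((q%:Z %| A)%Z && (q%:Z %| B)%Z) ->
  mult_reduction q (frey_curve A%:~R B%:~R).
Proof.
move=> q2 qABC qAB; apply: mult_reduction_minimal (frey_wintegral A B) _ _.
  rewrite frey_disc qdvd_int dvdz_mull // dvdz_exp //.
  case/or3P: qABC => h; first exact/dvdz_mulr/dvdz_mulr.
    exact/dvdz_mulr/dvdz_mull.
  exact/dvdz_mull.
rewrite frey_c4 qdvd_int Euclid_dvdzM //; apply/norP; split.
  rewrite (_ : 16 = 2 ^+ 4) // Euclid_dvdzX // andbT dvdzE /=.
  by rewrite dvdn_prime2.
by apply: contra qAB => /(prime_dvdz_sqr_form q_prime); apply.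
Qed.

End QIntegral.

Lemma odd_absz_eqm1_mod4 (a : int) : (a = -1 %[mod 4])%Z -> odd `|a|.
Proof. by lia. Qed.

Lemma odd_prime_dvd (n : nat) : odd n -> n != 1%N ->
  exists q, [/\ prime q, q != 2%N & (q %| n)%N].
Proof.
move=> n_odd n1; exists (pdiv n); split; last exact: pdiv_dvd.
  by apply: pdiv_prime; lia.
by apply: contraTneq n_odd => p2; rewrite -dvdn2 -p2 pdiv_dvd.
Qed.

Section FermatEquation.
Variables (p alpha : nat) (a b c : int).
Hypotheses (p_odd : odd p) (alpha_gt0 : (0 < alpha)%N).
Hypotheses (a_mod4 : (a = -1 %[mod 4])%Z).
Hypothesis abc_eq : a ^+ p + 2 ^+ alpha * b ^+ p + c ^+ p = 0.

Lemma fermat_sum : a ^+ p + 2 ^+ alpha * b ^+ p = - c ^+ p.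
Proof. by apply/eqP; rewrite -subr_eq0 opprK abc_eq. Qed.

Lemma fermat_odd_c : odd `|c|.
Proof.
apply: contraLR (odd_absz_eqm1_mod4 a_mod4); rewrite -!dvdn2 => c_even.
have : (2%:Z %| a ^+ p)%Z.
  rewrite -(addrK (2 ^+ alpha * b ^+ p) (a ^+ p)) fermat_sum.
  by rewrite rpredB ?rpredN ?dvdz_mulr ?dvdz_exp // odd_gt0.
by rewrite Euclid_dvdzX // => /andP [].
Qed.

Lemma fermat_ac_unit : b != 0 -> absz (a * c) = 1%N -> (a, b, c) = (-1, 1, -1).
Proof.
move=> b0 /eqP; rewrite abszM muln_eq1 => /andP [/eqP a1 /eqP c1].
have a_m1 : a = -1 by lia.
have sgn_p : (-1) ^+ p = -1 :> int by rewrite -signr_odd p_odd.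
move: abc_eq; rewrite a_m1 sgn_p.
have [-> | c_m1] : c = 1 \/ c = -1 by lia.
  rewrite expr1n => e; suff : 2 ^+ alpha * b ^+ p != 0 by lia.
  by rewrite mulf_neq0 ?expf_neq0.
rewrite c_m1 sgn_p => e.
have bp : b ^+ p = 1.
  have two_pow : 2 ^+ alpha = 2 * 2 ^+ alpha.-1 :> int by rewrite -exprS prednK.
  have : 1 <= 2 ^+ alpha.-1 :> int by rewrite exprn_ege1.
  by nia.
have : `|b| ^+ p == 1 by rewrite -normrX bp normr1.
rewrite pexpr_eq1 ?odd_gt0 // => /eqP b1.
have [b_1 | b_m1] : b = 1 \/ b = -1 by lia.
  by rewrite b_1.
by move: bp; rewrite b_m1 sgn_p.
Qed.

Lemma fermat_odd_prime_dvd : b != 0 -> (a, b, c) <> (-1, 1, -1) ->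
  exists q, [/\ prime q, q != 2%N & (q%:Z %| a * c)%Z].
Proof.
move=> b0 nt; apply: odd_prime_dvd.
  by rewrite abszM oddM odd_absz_eqm1_mod4 // fermat_odd_c.
by apply/eqP => /(fermat_ac_unit b0).
Qed.

Lemma fermat_terms_coprime q : prime q -> q != 2%N ->
  gcdz (gcdz a b) c = 1%N ->
  ~~ ((q%:Z %| a ^+ p)%Z && (q%:Z %| 2 ^+ alpha * b ^+ p)%Z).
Proof.
move=> q_pr q2 abc1; apply/negP => /andP [qA qB].
have p_gt0 := odd_gt0 p_odd.
have qC : (q%:Z %| c ^+ p)%Z.
  by rewrite -[c ^+ p]opprK -fermat_sum rpredN rpredD.
have q_not2 : ~~ (q%:Z %| 2 ^+ alpha)%Z.
  by rewrite Euclid_dvdzX // dvdzE /= dvdn_prime2 // (negPf q2).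
move: qA qB qC; rewrite Euclid_dvdzM // (negPf q_not2) !Euclid_dvdzX //.
rewrite p_gt0 !andbT /= => qa qb qc.
have : (q%:Z %| gcdz (gcdz a b) c)%Z by rewrite !dvdz_gcd qa qb qc.
by rewrite abc1 dvdz1 => /eqP /= q1; rewrite q1 in q_pr.
Qed.

End FermatEquation.

Theorem mainTheorem4 (p alpha : nat) (a b c : int) :
  prime p -> odd p -> (1 <= alpha)%N -> (alpha < p)%N ->
  a != 0 -> b != 0 -> c != 0 ->
  gcdz (gcdz a b) c = 1%N ->
  a ^+ p + 2 ^+ alpha * b ^+ p + c ^+ p = 0 ->
  (a = -1 %[mod 4])%Z ->
  (a, b, c) <> (-1, 1, -1) ->
  exists q : nat, [/\ prime q, q != 2%N &
    mult_reduction q (frey_curve ((a ^+ p)%:~R) ((2 ^+ alpha * b ^+ p)%:~R))].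
Proof.
move=> _ p_odd alpha_gt0 _ _ b0 _ abc1 abc_eq a_mod4 nt.
have [q [q_pr q2 q_ac]] :=
  fermat_odd_prime_dvd p_odd alpha_gt0 a_mod4 abc_eq b0 nt.
have p_gt0 := odd_gt0 p_odd.
exists q; split => //; apply: frey_mult_reduction => //; last first.
  exact: (fermat_terms_coprime p_odd abc_eq).
rewrite (fermat_sum abc_eq) rpredN.
move: q_ac; rewrite Euclid_dvdzM // => /orP [qa | qc].
  by rewrite (dvdz_exp p_gt0 qa).
by rewrite (dvdz_exp p_gt0 qc) !orbT.
Qed.
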